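(* Let $R>r>0$ with $R/r>\sqrt{2}$. Then the standard torus $T_{R,r}$ is conformally equivalent to the Hopf torus $\pi^{-1}(p_t)\subset S^3$ (with the metric induced from $S^3$) associated to the circle $p_t$ in $S^2$ parametrized by $$s\mapsto (2t^2-1)+2t\sqrt{1-t^2}\,(\cos(s)\,j+\sin(s)\,k),$$ where $t=r/R$.
   Context: For $R>r>0$, the standard torus $T_{R,r}\subset\mathbb{R}^3$ is the image of $\Phi(\theta,\varphi)=\big((R+r\cos\varphi)\cos\theta,(R+r\cos\varphi)\sin\theta,r\sin\varphi\big)$, $(\theta,\varphi)\in\mathbb{R}^2$, equipped with the complex structure induced by the Euclidean metric of $\mathbb{R}^3$. $Q$ denotes the quaternions, $S^3\subset Q$ the unit quaternions with the round metric, and $S^2$ is identified with the unit sphere in the real span of $1,j,k$. For $q=a+bi+cj+dk$ set $\tilde q=a-bi+cj+dk$; the Hopf map is $\pi:S^3\to S^2$, $\pi(q)=\tilde q q$. The Hopf torus associated to a closed curve $p$ in $S^2$ is $\pi^{-1}(p)$ with the complex structure induced by the metric inherited from $S^3$. *)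

From HB Require Import structures.
From mathcomp Require Import all_boot all_order all_algebra.
From mathcomp Require Import all_classical all_reals all_analysis.
Set Implicit Arguments. Unset Strict Implicit. Unset Printing Implicit Defensive.
Import Order.TTheory GRing.Theory Num.Theory.
Import numFieldNormedType.Exports.
Local Open Scope classical_set_scope.
Local Open Scope ring_scope.

Section Defs.
Variable R : realType.

Definition dotv (n : nat) (u v : 'rV[R]_n) : R := \sum_(i < n) u ord0 i * v ord0 i.

Fixpoint iter_dir (m n : nat) (vs : seq 'rV[R]_m) (f : 'rV[R]_m -> 'rV[R]_n)
  : 'rV[R]_m -> 'rV[R]_n :=
  match vs with
  | [::] => f
  | v :: vs' => fun x => derive (iter_dir vs' f) x v
  end.

Definition smooth_on (m n : nat) (U : set 'rV[R]_m) (f : 'rV[R]_m -> 'rV[R]_n) : Prop :=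
  forall vs : seq 'rV[R]_m, forall x, U x ->
    (forall v, derivable (iter_dir vs f) x v) /\ {for x, continuous (iter_dir vs f)}.

Definition tangent (m : nat) (M : set 'rV[R]_m) (p : 'rV[R]_m) : set 'rV[R]_m :=
  [set v | exists g : R -> 'rV[R]_m,
     (forall s, M (g s)) /\ g 0 = p /\ derivable g 0 1 /\ derive g 0 1 = v].

Definition smooth_map_on (m n : nat) (M : set 'rV[R]_m) (F : 'rV[R]_m -> 'rV[R]_n) : Prop :=
  exists U : set 'rV[R]_m, open U /\ M `<=` U /\ smooth_on U F.

Definition conformally_equivalent (m n : nat) (M : set 'rV[R]_m) (N : set 'rV[R]_n) : Prop :=
  exists (F : 'rV[R]_m -> 'rV[R]_n) (G : 'rV[R]_n -> 'rV[R]_m) (lam : 'rV[R]_m -> R),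
    smooth_map_on M F /\ smooth_map_on N G /\
    (forall x, M x -> N (F x) /\ G (F x) = x) /\
    (forall y, N y -> M (G y) /\ F (G y) = y) /\
    (forall p, M p -> 0 < lam p /\
       forall u v, tangent M p u -> tangent M p v ->
         dotv (derive F p u) (derive F p v) = lam p * dotv u v).

Definition vec3 (x y z : R) : 'rV[R]_3 := \row_(i < 3) nth 0 [:: x; y; z] i.
Definition vec4 (a b c d : R) : 'rV[R]_4 := \row_(i < 4) nth 0 [:: a; b; c; d] i.

Definition std_torus (R0 r0 : R) : set 'rV[R]_3 :=
  [set X | exists th ph : R,
     X = vec3 ((R0 + r0 * cos ph) * cos th) ((R0 + r0 * cos ph) * sin th) (r0 * sin ph)].

(* Quaternions a + b i + c j + d k as vectors (a,b,c,d) in R^4. *)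
Definition qa (q : 'rV[R]_4) := q ord0 (inord 0).
Definition qb (q : 'rV[R]_4) := q ord0 (inord 1).
Definition qc (q : 'rV[R]_4) := q ord0 (inord 2).
Definition qd (q : 'rV[R]_4) := q ord0 (inord 3).

Definition qmul (p q : 'rV[R]_4) : 'rV[R]_4 :=
  vec4 (qa p * qa q - qb p * qb q - qc p * qc q - qd p * qd q)
       (qa p * qb q + qb p * qa q + qc p * qd q - qd p * qc q)
       (qa p * qc q - qb p * qd q + qc p * qa q + qd p * qb q)
       (qa p * qd q + qb p * qc q - qc p * qb q + qd p * qa q).

Definition qtilde (q : 'rV[R]_4) : 'rV[R]_4 := vec4 (qa q) (- qb q) (qc q) (qd q).

Definition S3 : set 'rV[R]_4 := [set q | dotv q q = 1].

Definition hopf (q : 'rV[R]_4) : 'rV[R]_4 := qmul (qtilde q) q.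

(* Hopf torus over a closed curve p : R -> S^2 (S^2 inside span(1,j,k)). *)
Definition hopf_torus (p : R -> 'rV[R]_4) : set 'rV[R]_4 :=
  [set q | S3 q /\ exists s, hopf q = p s].

Definition circle_pt (t : R) (s : R) : 'rV[R]_4 :=
  vec4 (2 * t ^+ 2 - 1) 0
       (2 * t * Num.sqrt (1 - t ^+ 2) * cos s)
       (2 * t * Num.sqrt (1 - t ^+ 2) * sin s).

End Defs.

(* Inverse stereographic projection from the pole 1 of S^3, scaled by
   sqrt (R^2 - r^2), is conformal on all of R^3.  A point of T_{R,r} at
   distance rho from the axis of the torus satisfies |X|^2 + R^2 - r^2 = 2 R rho,
   which makes the j- and k-coordinates of its image satisfy c^2 + d^2 = 1 - t^2
   with t = r / R; so T_{R,r} is mapped onto the Clifford torus a^2 + b^2 = t^2,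
   c^2 + d^2 = 1 - t^2.  The real part of the Hopf map is a^2 + b^2 - c^2 - d^2,
   hence this Clifford torus is exactly the preimage of the circle p_t.  Both
   projections are rational maps without poles near the tori, hence smooth. *)

From HB Require Import structures.
From mathcomp Require Import all_boot all_order all_algebra.
From mathcomp Require Import all_classical all_reals all_analysis.
From mathcomp Require Import ring lra.
Import Order.TTheory GRing.Theory Num.Theory.
Import numFieldNormedType.Exports.
Local Open Scope classical_set_scope.
Local Open Scope ring_scope.
Set Implicit Arguments. Unset Strict Implicit. Unset Printing Implicit Defensive.

Lemma is_derive_mx_entry (R : realType) (p q : nat) (i : 'I_p) (j : 'I_q)
    (x v : 'M[R]_(p, q)) :
  is_derive x v (fun y : 'M[R]_(p, q) => y i j) (v i j).
Proof.
have dq : (fun h : R => h^-1 *: (((fun y : 'M[R]_(p, q) => y i j) \o shift x)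
    (h *: v) - x i j)) @ 0^' --> v i j.
  apply: (@cvg_trans _ ((fun=> v i j) @ 0^')); last exact: cvg_cst.
  apply: near_eq_cvg; apply: filterS (nbhs_dnbhs_neq 0) => h h_neq0 /=.
  by rewrite !mxE addrK /GRing.scale /= mulrA mulVf ?mul1r.
apply: DeriveDef; first by apply/cvg_ex; exists (v i j).
exact: cvg_lim dq.
Qed.

Lemma is_derive_scalel (R : realType) (V W : normedModType R) (k : V -> R)
    (w : W) (x v : V) (dk : R) :
  is_derive x v k dk -> is_derive x v (fun y => k y *: w) (dk *: w).
Proof.
case=> dkx <-.
have dq : (fun h : R => h^-1 *: (((fun y => k y *: w) \o shift x) (h *: v) - k x *: w))
    @ 0^' --> 'D_v k x *: w.
  have -> : (fun h : R => h^-1 *: (((fun y => k y *: w) \o shift x) (h *: v) - k x *: w))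
      = (fun h : R => (h^-1 *: ((k \o shift x) (h *: v) - k x)) *: w).
    by apply/funext => h /=; rewrite -scalerBl scalerA.
  exact: (@cvgZr_tmp _ _ _ _ (dnbhs_filter _) _ _ _ dkx).
apply: DeriveDef; first by apply/cvg_ex; eexists; exact: dq.
exact: cvg_lim dq.
Qed.

Section RationalExpressions.
Variables (R : realType) (m : nat).

(* Rational functions are closed under directional differentiation
   ([rexpr_deriv]), so by induction every iterated derivative of a rational map
   without poles on an open set is again such a map, hence continuous. *)
Inductive rexpr :=
  | RConst of R
  | RVar of 'I_m
  | RAdd of rexpr & rexpr
  | RMul of rexpr & rexpr
  | RInv of rexpr.

Fixpoint rexpr_eval (e : rexpr) (x : 'rV[R]_m) : R :=
  match e with
  | RConst c => c
  | RVar i => x ord0 i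
  | RAdd a b => rexpr_eval a x + rexpr_eval b x
  | RMul a b => rexpr_eval a x * rexpr_eval b x
  | RInv a => (rexpr_eval a x)^-1
  end.

Fixpoint rexpr_deriv (v : 'rV[R]_m) (e : rexpr) : rexpr :=
  match e with
  | RConst _ => RConst 0
  | RVar i => RConst (v ord0 i)
  | RAdd a b => RAdd (rexpr_deriv v a) (rexpr_deriv v b)
  | RMul a b => RAdd (RMul (rexpr_deriv v a) b) (RMul a (rexpr_deriv v b))
  | RInv a => RMul (RMul (RConst (-1)) (rexpr_deriv v a)) (RMul (RInv a) (RInv a))
  end.

Definition rexpr_iter_deriv (vs : seq 'rV[R]_m) (e : rexpr) : rexpr :=
  foldr rexpr_deriv e vs.

Fixpoint rexpr_regular_on (U : set 'rV[R]_m) (e : rexpr) : Prop :=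
  match e with
  | RConst _ | RVar _ => True
  | RAdd a b | RMul a b => rexpr_regular_on U a /\ rexpr_regular_on U b
  | RInv a => rexpr_regular_on U a /\ forall x, U x -> rexpr_eval a x != 0
  end.

Variable U : set 'rV[R]_m.

Lemma rexpr_regular_on_deriv v e :
  rexpr_regular_on U e -> rexpr_regular_on U (rexpr_deriv v e).
Proof.
elim: e => //= [a iha b ihb|a iha b ihb|a iha].
- by case=> /iha ? /ihb.
- by case=> ra rb; split; split => //; [apply: iha | apply: ihb].
- by case=> ra a_neq0; split; split => //; apply: iha.
Qed.

Lemma rexpr_regular_on_iter_deriv vs e :
  rexpr_regular_on U e -> rexpr_regular_on U (rexpr_iter_deriv vs e).
Proof. by elim: vs => //= v vs ih /ih; apply: rexpr_regular_on_deriv. Qed.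

Lemma is_derive_rexpr e x v : rexpr_regular_on U e -> U x ->
  is_derive x v (rexpr_eval e) (rexpr_eval (rexpr_deriv v e) x).
Proof.
move=> + Ux; elim: e => [c|i|a iha b ihb|a iha b ihb|a iha] /=.
- by move=> _; apply: is_derive_cst.
- by move=> _; apply: is_derive_mx_entry.
- by case=> /iha da /ihb db; apply: is_deriveD.
- case=> /iha da /ihb db; apply: is_derive_eq (is_deriveM da db) _.
  by rewrite /GRing.scale /= addrC mulrC [rexpr_eval a x * _]mulrC.
- case=> /iha da /(_ x Ux) a_neq0; apply: DeriveDef.
    by apply: derivableV => //; case: da.
  rewrite deriveV // derive_val /GRing.scale /=.
  by rewrite mulN1r !mulNr mulrC expr2 invfM.
Qed.

Lemma continuous_rexpr e x : rexpr_regular_on U e -> U x ->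
  {for x, continuous (rexpr_eval e)}.
Proof.
move=> + Ux; elim: e => /= [c|i|a iha b ihb|a iha b ihb|a iha].
- by move=> _; exact: cst_continuous.
- by move=> _; exact: coord_continuous.
- by case=> /iha ca /ihb cb; apply: (@cvgD _ _ _ _ (nbhs_filter x)).
- by case=> /iha ca /ihb cb; apply: (@cvgM _ _ _ (nbhs_filter x)).
- by case=> /iha ca /(_ x Ux) a_neq0; apply: (@cvgV _ _ _ (nbhs_filter x)).
Qed.

Definition rexpr_row n (E : 'I_n -> rexpr) : 'rV[R]_m -> 'rV[R]_n :=
  fun x => \row_j rexpr_eval (E j) x.

Lemma rexpr_row_sum n (E : 'I_n -> rexpr) :
  rexpr_row E = \sum_(j < n) (fun x => rexpr_eval (E j) x *: (delta_mx 0 j : 'rV[R]_n)).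
Proof.
rewrite fct_sumE; apply/funext => x.
by rewrite {1}[rexpr_row E x]row_sum_delta; apply: eq_bigr => j _; rewrite mxE.
Qed.

Lemma is_derive_rexpr_row n (E : 'I_n -> rexpr) x v :
  (forall j, rexpr_regular_on U (E j)) -> U x ->
  is_derive x v (rexpr_row E) (rexpr_row (fun j => rexpr_deriv v (E j)) x).
Proof.
move=> rE Ux; rewrite rexpr_row_sum.
have -> : rexpr_row (fun j => rexpr_deriv v (E j)) x =
    \sum_(j < n) rexpr_eval (rexpr_deriv v (E j)) x *: (delta_mx 0 j : 'rV[R]_n).
  by rewrite rexpr_row_sum fct_sumE.
apply: is_derive_sum => j.
exact/is_derive_scalel/is_derive_rexpr.
Qed.

Lemma continuous_rexpr_row n (E : 'I_n -> rexpr) x :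
  (forall j, rexpr_regular_on U (E j)) -> U x -> {for x, continuous (rexpr_row E)}.
Proof.
move=> rE Ux; rewrite rexpr_row_sum; elim/big_ind: _.
- exact: cst_continuous.
- by move=> f g cf cg; apply: (@cvgD _ _ _ _ (nbhs_filter x)).
- move=> j _.
  exact: (@cvgZr_tmp _ _ _ _ (nbhs_filter x) _ _ _ (continuous_rexpr (rE j) Ux)).
Qed.

Hypothesis U_open : open U.

Lemma iter_dir_rexpr_row n (E : 'I_n -> rexpr) vs x :
  (forall j, rexpr_regular_on U (E j)) -> U x ->
  iter_dir vs (rexpr_row E) x = rexpr_row (fun j => rexpr_iter_deriv vs (E j)) x.
Proof.
move=> rE; elim: vs x => [//|v vs ih] x Ux /=.
have rE' j : rexpr_regular_on U (rexpr_iter_deriv vs (E j)).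
  exact: rexpr_regular_on_iter_deriv.
rewrite (@near_eq_derive _ _ _ _ (rexpr_row (fun j => rexpr_iter_deriv vs (E j)))).
  by have dF := is_derive_rexpr_row v rE' Ux; rewrite derive_val.
by apply: filterS (open_nbhs_nbhs (conj U_open Ux)) => y Uy; rewrite ih.
Qed.

Lemma smooth_on_rexpr_row n (E : 'I_n -> rexpr) :
  (forall j, rexpr_regular_on U (E j)) -> smooth_on U (rexpr_row E).
Proof.
move=> rE vs x Ux.
have rE' j : rexpr_regular_on U (rexpr_iter_deriv vs (E j)).
  exact: rexpr_regular_on_iter_deriv.
have near_iter : \forall y \near x,
    rexpr_row (fun j => rexpr_iter_deriv vs (E j)) y = iter_dir vs (rexpr_row E) y.
  by apply: filterS (open_nbhs_nbhs (conj U_open Ux)) => y Uy; rewrite iter_dir_rexpr_row.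
split.
- move=> w; apply: near_eq_derivable near_iter _.
  by case: (is_derive_rexpr_row w rE' Ux).
- rewrite /prop_for /continuous_at (iter_dir_rexpr_row _ rE Ux).
  apply: cvg_trans (continuous_rexpr_row rE' Ux).
  exact: (@near_eq_cvg _ _ _ (nbhs_filter x)).
Qed.

End RationalExpressions.
Arguments RConst {R m}. Arguments RVar {R m}. Arguments RAdd {R m}.
Arguments RMul {R m}. Arguments RInv {R m}.

Section Coordinates.
Variable R : realType.

Lemma qa_vec4 (a b c d : R) : qa (vec4 a b c d) = a.
Proof. by rewrite /qa mxE inordK. Qed.
Lemma qb_vec4 (a b c d : R) : qb (vec4 a b c d) = b.
Proof. by rewrite /qb mxE inordK. Qed.
Lemma qc_vec4 (a b c d : R) : qc (vec4 a b c d) = c.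
Proof. by rewrite /qc mxE inordK. Qed.
Lemma qd_vec4 (a b c d : R) : qd (vec4 a b c d) = d.
Proof. by rewrite /qd mxE inordK. Qed.

Lemma vec3_entry (a b c : R) (i : nat) : (i < 3)%N ->
  vec3 a b c ord0 (inord i) = nth 0 [:: a; b; c] i.
Proof. by move=> lt_i3; rewrite mxE inordK. Qed.

Lemma ord4_cases (j : 'I_4) : [\/ j = inord 0, j = inord 1, j = inord 2 | j = inord 3].
Proof.
case: j => -[|[|[|[|//]]]] lt_j4;
  [constructor 1 | constructor 2 | constructor 3 | constructor 4];
  by apply/val_inj; rewrite /= inordK.
Qed.

Lemma ord3_cases (j : 'I_3) : [\/ j = inord 0, j = inord 1 | j = inord 2].
Proof.
case: j => -[|[|[|//]]] lt_j3; [constructor 1 | constructor 2 | constructor 3];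
  by apply/val_inj; rewrite /= inordK.
Qed.

Lemma quat_ext (p q : 'rV[R]_4) :
  qa p = qa q -> qb p = qb q -> qc p = qc q -> qd p = qd q -> p = q.
Proof.
by move=> ea eb ec ed; apply/rowP => j; case: (ord4_cases j) => ->.
Qed.

Lemma rv3_ext (x y : 'rV[R]_3) : x ord0 (inord 0) = y ord0 (inord 0) ->
  x ord0 (inord 1) = y ord0 (inord 1) -> x ord0 (inord 2) = y ord0 (inord 2) -> x = y.
Proof.
by move=> e0 e1 e2; apply/rowP => j; case: (ord3_cases j) => ->.
Qed.

Lemma dotv4E (p q : 'rV[R]_4) :
  dotv p q = qa p * qa q + qb p * qb q + qc p * qc q + qd p * qd q.
Proof.
rewrite /dotv !big_ord_recl big_ord0 addr0 !addrA.
by congr (_ + _ + _ + _); congr (_ * _); congr (_ _ _); apply/val_inj; rewrite /= inordK.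
Qed.

Lemma dotv3E (x y : 'rV[R]_3) : dotv x y =
  x ord0 (inord 0) * y ord0 (inord 0) + x ord0 (inord 1) * y ord0 (inord 1)
  + x ord0 (inord 2) * y ord0 (inord 2).
Proof.
rewrite /dotv !big_ord_recl big_ord0 addr0 !addrA.
by congr (_ + _ + _); congr (_ * _); congr (_ _ _); apply/val_inj; rewrite /= inordK.
Qed.

Lemma dotv_ge0 n (u : 'rV[R]_n) : 0 <= dotv u u.
Proof. by apply: sumr_ge0 => i _; rewrite -expr2 sqr_ge0. Qed.

Lemma unit_circle_angle (x y : R) : x ^+ 2 + y ^+ 2 = 1 ->
  exists th, cos th = x /\ sin th = y.
Proof.
move=> xy1.
have x_itv : -1 <= x <= 1 by apply/andP; split; nra.
have cos_acos : cos (acos x) = x by apply: acosK; rewrite in_itv.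
have sin_acos : sin (acos x) = `|y|.
  by rewrite sin_acos // -sqrtr_sqr; congr Num.sqrt; lra.
have [y_ge0|y_lt0] := lerP 0 y.
- by exists (acos x); rewrite cos_acos sin_acos ger0_norm.
- by exists (- acos x); rewrite cosN sinN cos_acos sin_acos ltr0_norm ?opprK.
Qed.

Lemma unit_circle_angle_div (x y d : R) : d != 0 ->
  x ^+ 2 + y ^+ 2 = d ^+ 2 -> exists th, cos th = x / d /\ sin th = y / d.
Proof.
move=> d_neq0 xyd; apply: unit_circle_angle.
by rewrite !expr_div_n -mulrDl xyd divff // sqrf_eq0.
Qed.

End Coordinates.

Section CliffordTorus.
Variable R : realType.

Lemma hopfE (q : 'rV[R]_4) : hopf q =
  vec4 (qa q ^+ 2 + qb q ^+ 2 - qc q ^+ 2 - qd q ^+ 2) 0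
       (2 * (qa q * qc q + qb q * qd q)) (2 * (qa q * qd q - qb q * qc q)).
Proof.
by apply: quat_ext; rewrite /hopf /qmul /qtilde
  !(qa_vec4, qb_vec4, qc_vec4, qd_vec4); ring.
Qed.

Definition clifford_torus (t : R) : set 'rV[R]_4 :=
  [set q | qa q ^+ 2 + qb q ^+ 2 = t ^+ 2 /\ qc q ^+ 2 + qd q ^+ 2 = 1 - t ^+ 2].

Lemma clifford_torus_S3 t q : clifford_torus t q -> S3 q.
Proof. by case=> ab cd; rewrite /S3 /= dotv4E -!expr2; lra. Qed.

Variable t : R.
Hypotheses (t_gt0 : 0 < t) (t_lt1 : t < 1).

Lemma clifford_torus_qa_lt1 q : clifford_torus t q -> qa q < 1.
Proof. by case=> ab _; have := t_gt0; have := t_lt1; nra. Qed.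

Lemma hopf_torus_circle_pt : hopf_torus (circle_pt t) = clifford_torus t.
Proof.
set b := Num.sqrt (1 - t ^+ 2).
have omt2_gt0 : 0 < 1 - t ^+ 2 by have := t_gt0; have := t_lt1; nra.
have b_gt0 : 0 < b by rewrite sqrtr_gt0.
have b2 : b ^+ 2 = 1 - t ^+ 2 by rewrite sqr_sqrtr // ltW.
apply/seteqP; split => q /=.
- case=> q1 [s /(congr1 (@qa R))]; rewrite hopfE /circle_pt !qa_vec4 => ha.
  by move: q1; rewrite /S3 /= dotv4E -!expr2 => q1; split; lra.
- move=> Cq; have [ab cd] := Cq; split; first exact: clifford_torus_S3 Cq.
  have [t_neq0 b_neq0] : t != 0 /\ b != 0 by rewrite !gt_eqF.
  have [s [cos_s sin_s]] : exists s,
      cos s = (qa q * qc q + qb q * qd q) / (t * b) /\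
      sin s = (qa q * qd q - qb q * qc q) / (t * b).
    apply: unit_circle_angle_div; first by rewrite mulf_neq0.
    transitivity ((qa q ^+ 2 + qb q ^+ 2) * (qc q ^+ 2 + qd q ^+ 2)); first by ring.
    by rewrite ab cd -b2 exprMn.
  exists s; rewrite hopfE /circle_pt -/b cos_s sin_s.
  apply: quat_ext; rewrite !(qa_vec4, qb_vec4, qc_vec4, qd_vec4) //.
  - by lra.
  - by field; rewrite b_neq0 t_neq0.
  - by field; rewrite b_neq0 t_neq0.
Qed.

End CliffordTorus.

Section Stereographic.
Variables (R : realType) (c : R).
Hypothesis c_gt0 : 0 < c.

(* The
   j-, k- and i-coordinates of q become x, y and z, so that the axis x = y = 0
   of the standard torus lies in the plane spanned by 1 and i. *)
Definition stereo (q : 'rV[R]_4) : 'rV[R]_3 :=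
  vec3 (c * qc q / (1 - qa q)) (c * qd q / (1 - qa q)) (c * qb q / (1 - qa q)).

Definition stereo_inv_denom (X : 'rV[R]_3) : R := 1 + dotv X X / c ^+ 2.

Definition stereo_inv (X : 'rV[R]_3) : 'rV[R]_4 :=
  let S := stereo_inv_denom X in
  vec4 (1 - 2 / S) (2 * X ord0 (inord 2) / (c * S))
       (2 * X ord0 (inord 0) / (c * S)) (2 * X ord0 (inord 1) / (c * S)).

Definition stereo_conformal_factor (X : 'rV[R]_3) : R :=
  (2 / (c * stereo_inv_denom X)) ^+ 2.

Let c_neq0 : c != 0 := lt0r_neq0 c_gt0.

Lemma sqr_add_dotv_neq0 (X : 'rV[R]_3) : c ^+ 2 + dotv X X != 0.
Proof. by apply/lt0r_neq0/ltr_wpDr; [exact: dotv_ge0 | exact: exprn_gt0]. Qed.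

Lemma stereo_inv_denom_gt0 X : 0 < stereo_inv_denom X.
Proof. by apply: ltr_wpDr; rewrite ?divr_ge0 ?dotv_ge0 ?sqr_ge0. Qed.

Lemma stereo_inv_denom_neq0 X : stereo_inv_denom X != 0.
Proof. exact/lt0r_neq0/stereo_inv_denom_gt0. Qed.

Lemma stereo_conformal_factor_gt0 X : 0 < stereo_conformal_factor X.
Proof.
rewrite exprn_gt0 // divr_gt0 // mulr_gt0 //; exact: stereo_inv_denom_gt0.
Qed.

Lemma stereo_inv_S3 X : S3 (stereo_inv X).
Proof.
move: (sqr_add_dotv_neq0 X).
rewrite /S3 /= dotv4E /stereo_inv /stereo_inv_denom dotv3E.
rewrite !(qa_vec4, qb_vec4, qc_vec4, qd_vec4) => D_neq0.
by field; rewrite D_neq0 c_neq0.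
Qed.

Lemma stereo_invK : cancel stereo_inv stereo.
Proof.
move=> X; have S_neq0 := stereo_inv_denom_neq0 X.
rewrite /stereo /stereo_inv !(qa_vec4, qb_vec4, qc_vec4, qd_vec4).
set S := stereo_inv_denom X in S_neq0 *.
have -> : 1 - (1 - 2 / S) = 2 / S by ring.
by apply: rv3_ext; rewrite !vec3_entry //=; field; rewrite S_neq0 c_neq0.
Qed.

Lemma stereoK q : S3 q -> qa q < 1 -> stereo_inv (stereo q) = q.
Proof.
rewrite /S3 /= dotv4E => q1 qa_lt1.
have oma_neq0 : 1 - qa q != 0 by rewrite subr_eq0 gt_eqF.
have S_eq : stereo_inv_denom (stereo q) = 2 / (1 - qa q).
  rewrite /stereo_inv_denom dotv3E !vec3_entry //=.
  transitivity (1 + (qb q ^+ 2 + qc q ^+ 2 + qd q ^+ 2) / (1 - qa q) ^+ 2).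
    by field; rewrite oma_neq0 c_neq0.
  have -> : qb q ^+ 2 + qc q ^+ 2 + qd q ^+ 2 = (1 - qa q) * (1 + qa q).
    by rewrite -!expr2 in q1; lra.
  by field.
apply: quat_ext; rewrite /stereo_inv S_eq !(qa_vec4, qb_vec4, qc_vec4, qd_vec4).
all: by rewrite ?vec3_entry //=; field; rewrite ?oma_neq0 ?c_neq0.
Qed.

Let x_ {m : nat} (i : nat) : rexpr R m.+1 := RVar (inord i).

Definition stereo_inv_denom_expr : rexpr R 3 :=
  RAdd (RConst 1) (RMul (RAdd (RAdd (RMul (x_ 0) (x_ 0)) (RMul (x_ 1) (x_ 1)))
                              (RMul (x_ 2) (x_ 2))) (RConst (c ^+ 2)^-1)).

Definition stereo_inv_expr (j : 'I_4) : rexpr R 3 :=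
  let invS := RInv stereo_inv_denom_expr in
  match nat_of_ord j with
  | 0 => RAdd (RConst 1) (RMul (RConst (-2)) invS)
  | 1 => RMul (RConst (2 / c)) (RMul (x_ 2) invS)
  | 2 => RMul (RConst (2 / c)) (RMul (x_ 0) invS)
  | _ => RMul (RConst (2 / c)) (RMul (x_ 1) invS)
  end.

Lemma stereo_inv_exprE : stereo_inv = rexpr_row stereo_inv_expr.
Proof.
apply/funext => X; move: (sqr_add_dotv_neq0 X).
rewrite /stereo_inv /stereo_inv_denom dotv3E => D_neq0.
apply: quat_ext; rewrite !(qa_vec4, qb_vec4, qc_vec4, qd_vec4) /qa /qb /qc /qd.
all: by rewrite !mxE /stereo_inv_expr !inordK //=; field; rewrite ?D_neq0 ?c_neq0.
Qed.

Lemma stereo_inv_expr_regular j : rexpr_regular_on setT (stereo_inv_expr j).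
Proof.
have denom_neq0 X : setT X -> rexpr_eval stereo_inv_denom_expr X != 0.
  by move=> _; rewrite /= -dotv3E stereo_inv_denom_neq0.
by case: (ord4_cases j) => ->; rewrite /stereo_inv_expr inordK.
Qed.

Lemma smooth_on_stereo_inv : smooth_on setT stereo_inv.
Proof.
rewrite stereo_inv_exprE; apply: smooth_on_rexpr_row; first exact: openT.
exact: stereo_inv_expr_regular.
Qed.

Lemma stereo_inv_conformal X u v :
  dotv ('D_u stereo_inv X) ('D_v stereo_inv X) = stereo_conformal_factor X * dotv u v.
Proof.
have dF w := is_derive_rexpr_row w stereo_inv_expr_regular (I : setT X).
move: (sqr_add_dotv_neq0 X); rewrite stereo_inv_exprE !derive_val.
rewrite dotv4E !dotv3E /qa /qb /qc /qd !mxE /stereo_inv_expr !inordK //=.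
rewrite /stereo_conformal_factor /stereo_inv_denom dotv3E => D_neq0.
by field; rewrite ?D_neq0 ?c_neq0.
Qed.

Definition stereo_expr (j : 'I_3) : rexpr R 4 :=
  let inv_oma := RInv (RAdd (RConst 1) (RMul (RConst (-1)) (x_ 0))) in
  match nat_of_ord j with
  | 0 => RMul (RConst c) (RMul (x_ 2) inv_oma)
  | 1 => RMul (RConst c) (RMul (x_ 3) inv_oma)
  | _ => RMul (RConst c) (RMul (x_ 1) inv_oma)
  end.

Lemma stereo_exprE : stereo = rexpr_row stereo_expr.
Proof.
apply/funext => q; apply: rv3_ext; rewrite !vec3_entry //= !mxE /stereo_expr !inordK //=.
all: by rewrite mulN1r mulrA.
Qed.

Lemma open_qa_lt1 : open [set q : 'rV[R]_4 | qa q < 1].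
Proof.
have qa_cont : continuous (@qa R) by move=> q; exact: coord_continuous.
exact: (open_comp (fun q _ => qa_cont q) (@open_lt _ 1)).
Qed.

Lemma stereo_expr_regular j : rexpr_regular_on [set q | qa q < 1] (stereo_expr j).
Proof.
have oma_neq0 q : qa q < 1 -> rexpr_eval (RAdd (RConst 1) (RMul (RConst (-1)) (x_ 0))) q != 0.
  by move=> qa_lt1; rewrite /= mulN1r subr_eq0 gt_eqF.
by case: (ord3_cases j) => ->; rewrite /stereo_expr inordK.
Qed.

Lemma smooth_on_stereo : smooth_on [set q | qa q < 1] stereo.
Proof.
rewrite stereo_exprE; apply: smooth_on_rexpr_row; first exact: open_qa_lt1.
exact: stereo_expr_regular.
Qed.

End Stereographic.

Section StandardTorus.
Variables (R : realType) (R0 r0 : R).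
Hypotheses (r0_gt0 : 0 < r0) (r0_lt_R0 : r0 < R0).

Let c := Num.sqrt (R0 ^+ 2 - r0 ^+ 2).

Lemma torus_radius_gt0 : 0 < R0. Proof. exact: lt_trans r0_lt_R0. Qed.

Lemma torus_ratio_gt0 : 0 < r0 / R0. Proof. by rewrite divr_gt0 // torus_radius_gt0. Qed.

Lemma torus_ratio_lt1 : r0 / R0 < 1. Proof. by rewrite ltr_pdivrMr ?torus_radius_gt0 ?mul1r. Qed.

Lemma torus_scale_sqr_gt0 : 0 < R0 ^+ 2 - r0 ^+ 2.
Proof. by have := r0_gt0; have := r0_lt_R0; nra. Qed.

Lemma torus_scale_gt0 : 0 < c.
Proof. by rewrite sqrtr_gt0 torus_scale_sqr_gt0. Qed.

Lemma torus_scale_sqr : c ^+ 2 = R0 ^+ 2 - r0 ^+ 2.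
Proof. by rewrite sqr_sqrtr // ltW // torus_scale_sqr_gt0. Qed.

Lemma torus_axis_dist_gt0 ph : 0 < R0 + r0 * cos ph.
Proof. by have := cos_geN1 ph; have := r0_gt0; have := r0_lt_R0; nra. Qed.

Lemma stereo_inv_denom_torus th ph (rho := R0 + r0 * cos ph) :
  stereo_inv_denom c (vec3 (rho * cos th) (rho * sin th) (r0 * sin ph))
  = 2 * R0 * rho / c ^+ 2.
Proof.
rewrite /stereo_inv_denom dotv3E !vec3_entry //=.
transitivity (1 + (rho ^+ 2 * (cos th ^+ 2 + sin th ^+ 2) + r0 ^+ 2 * sin ph ^+ 2) / c ^+ 2).
  by ring.
rewrite cos2Dsin2 sin2cos2 /rho torus_scale_sqr.
by field; rewrite lt0r_neq0 // torus_scale_sqr_gt0.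
Qed.

Lemma stereo_inv_std_torus X :
  std_torus R0 r0 X -> clifford_torus (r0 / R0) (stereo_inv c X).
Proof.
have [R0_neq0 c_neq0] : R0 != 0 /\ c != 0.
  by rewrite !gt_eqF ?torus_radius_gt0 ?torus_scale_gt0.
case=> th [ph ->]; have S_eq := stereo_inv_denom_torus th ph.
set rho := R0 + r0 * cos ph in S_eq *; set x := vec3 _ _ _ in S_eq *.
have rho_neq0 : rho != 0 by rewrite lt0r_neq0 // torus_axis_dist_gt0.
suff cd : qc (stereo_inv c x) ^+ 2 + qd (stereo_inv c x) ^+ 2 = 1 - (r0 / R0) ^+ 2.
  split => //; move: (stereo_inv_S3 torus_scale_gt0 x).
  by rewrite /S3 /= dotv4E -!expr2; lra.
rewrite /stereo_inv qc_vec4 qd_vec4 S_eq /x !vec3_entry //=.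
transitivity ((2 * rho / (c * (2 * R0 * rho / c ^+ 2))) ^+ 2 * (cos th ^+ 2 + sin th ^+ 2)).
  by ring.
rewrite cos2Dsin2 mulr1.
transitivity (c ^+ 2 / R0 ^+ 2); first by field; rewrite rho_neq0 R0_neq0 c_neq0.
by rewrite torus_scale_sqr; field.
Qed.

Lemma stereo_clifford_torus q :
  clifford_torus (r0 / R0) q -> std_torus R0 r0 (stereo c q).
Proof.
move=> Cq; have [ab cd] := Cq.
have [R0_neq0 r0_neq0 c_neq0] : [/\ R0 != 0, r0 != 0 & c != 0].
  by rewrite !gt_eqF ?torus_radius_gt0 ?torus_scale_gt0.
have oma_neq0 : 1 - qa q != 0.
  by rewrite subr_eq0 gt_eqF // (clifford_torus_qa_lt1 torus_ratio_gt0 torus_ratio_lt1).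
have [th [cos_th sin_th]] : exists th, cos th = R0 * qc q / c /\ sin th = R0 * qd q / c.
  apply: unit_circle_angle_div => //.
  transitivity (R0 ^+ 2 * (qc q ^+ 2 + qd q ^+ 2)); first by ring.
  by rewrite cd torus_scale_sqr; field.
have [ph [cos_ph sin_ph]] : exists ph,
    cos ph = (c ^+ 2 - R0 ^+ 2 * (1 - qa q)) / (R0 * r0 * (1 - qa q)) /\
    sin ph = c * R0 * qb q / (R0 * r0 * (1 - qa q)).
  apply: unit_circle_angle_div; first by rewrite !mulf_neq0.
  have b2 : R0 ^+ 2 * qb q ^+ 2 = r0 ^+ 2 - R0 ^+ 2 * qa q ^+ 2.
    have -> : qb q ^+ 2 = (r0 / R0) ^+ 2 - qa q ^+ 2 by rewrite -ab; ring.
    by field.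
  transitivity ((c ^+ 2 - R0 ^+ 2 * (1 - qa q)) ^+ 2 + c ^+ 2 * (R0 ^+ 2 * qb q ^+ 2)).
    by ring.
  by rewrite b2 torus_scale_sqr; ring.
exists th, ph; apply: rv3_ext; rewrite /stereo !vec3_entry //= ?cos_th ?sin_th ?cos_ph ?sin_ph.
all: by field; rewrite ?R0_neq0 ?r0_neq0 ?c_neq0 ?oma_neq0.
Qed.

End StandardTorus.

Theorem corollary3 (R : realType) (R0 r0 : R) :
  0 < r0 -> r0 < R0 -> Num.sqrt 2 < R0 / r0 ->
  conformally_equivalent (std_torus R0 r0) (hopf_torus (circle_pt (r0 / R0))).
Proof.
move=> r0_gt0 r0_lt_R0 _.
have t_gt0 := torus_ratio_gt0 r0_gt0 r0_lt_R0.
have t_lt1 := torus_ratio_lt1 r0_gt0 r0_lt_R0.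
have c_gt0 := torus_scale_gt0 r0_gt0 r0_lt_R0.
rewrite hopf_torus_circle_pt //.
pose c := Num.sqrt (R0 ^+ 2 - r0 ^+ 2).
exists (stereo_inv c), (stereo c), (stereo_conformal_factor c).
split; [|split; [|split; [|split]]].
- by exists setT; split; [exact: openT | split; [by [] | exact: smooth_on_stereo_inv]].
- exists [set q | qa q < 1]; split; first exact: open_qa_lt1.
  by split; [move=> q; exact: clifford_torus_qa_lt1 | exact: smooth_on_stereo].
- move=> X TX; split; [exact: stereo_inv_std_torus | exact: stereo_invK].
- move=> q Cq; split; first exact: stereo_clifford_torus.
  by apply: (stereoK c_gt0); [exact: clifford_torus_S3 Cq | exact: clifford_torus_qa_lt1 Cq].
- move=> X _; split; first exact: stereo_conformal_factor_gt0.
  by move=> u v _ _; exact: stereo_inv_conformal.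
Qed.
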